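(* Let $x$ be a random vector in $\mathbb{R}^d$ and $g:\mathbb{R}^d\to[0,\infty)$ be a nonnegative lower semicontinuous function. Assume that \[\mathbb{E}[\|x\|^2]\le\beta_c\quad\text{and}\quad\mathbb{E}\Big[\frac{g(x)}{1+\|x\|^n}\Big]\le\alpha_c\] for some integer $n\ge1$ and positive numbers $\alpha_c,\beta_c$. Then \[\mathbb{E}\Big[g(x)^{\frac{1}{2\lceil n/2\rceil}}\Big]\le\big(1+\sqrt{\beta_c}\big)(2\alpha_c)^{\frac{1}{2\lceil n/2\rceil}}.\]
   Context: $\|\cdot\|$ is the Euclidean norm and $\lceil\cdot\rceil$ the ceiling function. *)

From HB Require Import structures.
From mathcomp Require Import all_boot all_order all_algebra.
From mathcomp Require Import all_classical all_reals all_analysis.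
Set Implicit Arguments. Unset Strict Implicit. Unset Printing Implicit Defensive.
Import Order.TTheory GRing.Theory Num.Theory.
Import numFieldNormedType.Exports.
Local Open Scope ring_scope.

Definition euclid_norm {R : realType} {d : nat} (v : 'rV[R]_d) : R :=
  Num.sqrt (\sum_(i < d) v ord0 i ^+ 2).

(* Put m := 2 * ceil(n/2), so that n <= m, H := g(x) / (1 + |x|^n) and
   w := H / alpha.  Since 1 + |x|^n <= 2 (1 + |x|)^m, we get
   g(x)^(1/m) <= (2 alpha)^(1/m) w^(1/m) (1 + |x|).  Young's inequality gives
   w^(1/m) <= w/m + 1 - 1/m and w^(2/m) <= 2w/m + 1 - 2/m, and
   w^(1/m) |x| <= (sqrt beta / 2) w^(2/m) + |x|^2 / (2 sqrt beta).  The
   resulting bound on g(x)^(1/m) is affine in H and |x|^2, so taking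
   expectations with E[H] <= alpha and E[|x|^2] <= beta gives
   (2 alpha)^(1/m) (1 + sqrt beta).
   The integral of a nonnegative function is the supremum of the integrals of
   its simple minorants. *)

From HB Require Import structures.
From mathcomp Require Import all_boot all_order all_algebra.
From mathcomp Require Import all_classical all_reals all_analysis.
From mathcomp Require Import measurable_realfun.
From mathcomp Require Import ring lra zify.

Set Implicit Arguments.
Unset Strict Implicit.
Unset Printing Implicit Defensive.
Import Order.TTheory GRing.Theory Num.Theory.
Import numFieldNormedType.Exports.
Local Open Scope ring_scope.
Local Open Scope classical_set_scope.

Section nonneg_integral.
Local Open Scope ereal_scope.
Context d (T : measurableType d) (R : realType).
Variable mu : {measure set T -> \bar R}.

Lemma ge0_le_integral_nonmeasurable (f1 f2 : T -> \bar R) :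
  (forall t, 0 <= f1 t) -> (forall t, f1 t <= f2 t) ->
  \int[mu]_t f1 t <= \int[mu]_t f2 t.
Proof.
move=> f10 f12; have f20 t := le_trans (f10 t) (f12 t).
rewrite !ge0_integralTE//; apply: ereal_sup_le => _ [h hf1 <-].
by exists h => // t; exact: le_trans (hf1 t) (f12 t).
Qed.

Import HBNNSimple.

(* A simple minorant s of G satisfies s <= c s' + K, where the measurable
   s' := (s - K)^+ / c is a minorant of H. *)
Lemma ge0_le_integral_scale_add (G H K : T -> R) (c : R) : (0 < c)%R ->
  (forall t, 0 <= G t)%R -> (forall t, 0 <= H t)%R -> (forall t, 0 <= K t)%R ->
  measurable_fun [set: T] K -> (forall t, G t <= c * H t + K t)%R ->
  \int[mu]_t (G t)%:E <= c%:E * \int[mu]_t (H t)%:E + \int[mu]_t (K t)%:E.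
Proof.
move=> c0 G0 H0 K0 mK GHK.
rewrite ge0_integralTE; last by move=> t; rewrite lee_fin.
apply: ge_ereal_sup => _ [s sG <-].
have -> : sintegral mu s = \int[mu]_t (s t)%:E.
  by rewrite integral_nnsfun// patch_setT.
pose s' t := (Num.max (s t - K t) 0 / c)%R.
have ms' : measurable_fun [set: T] s'.
  apply: measurable_funM => //; apply: measurable_maxr => //.
  exact: measurable_funB.
have s'0 t : (0 <= s' t)%R by rewrite divr_ge0 ?le_max ?lexx ?orbT// ltW.
have s'H t : (s' t <= H t)%R.
  rewrite ler_pdivrMr// ge_max mulr_ge0 ?(ltW c0)// andbT lerBlDr mulrC.
  by rewrite (le_trans _ (GHK t))// -lee_fin.
apply: (@le_trans _ _ (\int[mu]_t ((c * s' t)%:E + (K t)%:E))).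
  apply: ge0_le_integral_nonmeasurable => t; first by rewrite lee_fin.
  by rewrite -EFinD lee_fin mulrC divfK ?gt_eqF// -lerBlDr le_max lexx.
rewrite ge0_integralD//; first last.
- exact/measurable_EFinP.
- by move=> t _; rewrite lee_fin.
- by apply/measurable_EFinP; exact: measurable_funM.
- by move=> t _; rewrite lee_fin mulr_ge0// ltW.
under eq_integral do rewrite EFinM.
rewrite ge0_integralZl//.
- rewrite leeD2r// lee_wpmul2l ?lee_fin ?(ltW c0)//.
  by apply: ge0_le_integral_nonmeasurable => t; rewrite lee_fin.
- exact/measurable_EFinP.
- by move=> t _; rewrite lee_fin.
- by rewrite lee_fin ltW.
Qed.

End nonneg_integral.

Section real_bounds.
Variable R : realType.

Lemma powR_invn_le (u : R) j : 0 <= u -> (0 < j)%N ->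
  u `^ j%:R^-1 <= u / j%:R + (1 - j%:R^-1).
Proof.
move=> u0; case: j => [//|[_|j _]].
  by rewrite invr1 powRr1// mulr1 subrr addr0.
set p : R := j.+2%:R.
have p0 : 0 < p by rewrite ltr0n.
have q0 : 0 < (1 - p^-1)^-1 by rewrite invr_gt0 subr_gt0 invf_lt1// ltr1n.
have := conjugate_powR (powR_ge0 u p^-1) ler01 p0 q0.
rewrite invrK addrC subrK => /(_ erefl).
by rewrite mulr1 powR1 -powRrM mulVf ?gt_eqF// powRr1// mul1r.
Qed.

Lemma one_addX_le (N : R) n m : 0 <= N -> (n <= m)%N ->
  1 + N ^+ n <= 2 * (1 + N) ^+ m.
Proof.
move=> N0 nm; have N1 : 1 <= 1 + N by rewrite lerDl.
have h1 : 1 <= (1 + N) ^+ m by exact: exprn_ege1.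
have hn : N ^+ n <= (1 + N) ^+ m.
  apply: le_trans (ler_weXn2l N1 nm).
  by apply: lerXn2r; rewrite ?nnegrE ?addr_ge0// lerDr.
lra.
Qed.

Lemma powR_le_ratio (g N : R) n k : 0 <= g -> 0 <= N -> (n <= 2 * k)%N ->
  (0 < k)%N ->
  g `^ (2 * k)%:R^-1 <= (2 * (g / (1 + N ^+ n))) `^ (2 * k)%:R^-1 * (1 + N).
Proof.
move=> g0 N0 nk k0; set p : R := (2 * k)%:R^-1.
have D0 : 0 < 1 + N ^+ n by rewrite ltr_pwDl// exprn_ge0.
have H0 : 0 <= 2 * (g / (1 + N ^+ n)) by rewrite mulr_ge0// divr_ge0// ltW.
have gle : g <= 2 * (g / (1 + N ^+ n)) * (1 + N) ^+ (2 * k).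
  rewrite (mulrC 2) -mulrA {1}(_ : g = g / (1 + N ^+ n) * (1 + N ^+ n)).
    by apply: ler_wpM2l; [exact: divr_ge0 g0 (ltW D0) | exact: one_addX_le].
  by rewrite divfK ?gt_eqF.
have X0 : 0 <= (1 + N) ^+ (2 * k) by rewrite exprn_ge0// addr_ge0.
have p0 : 0 <= p by rewrite invr_ge0.
apply: le_trans (ge0_ler_powR p0 _ _ gle) _; rewrite ?nnegrE ?(mulr_ge0 H0 X0)//.
rewrite powRM// -[(1 + N) ^+ _]powR_mulrn ?addr_ge0// -powRrM.
by rewrite mulfV ?pnatr_eq0 ?muln_eq0 -?lt0n// powRr1 ?addr_ge0.
Qed.

Lemma powR_mul1D_le (w N s : R) k : 0 <= w -> 0 <= N -> 0 < s -> (0 < k)%N ->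
  w `^ (2 * k)%:R^-1 * (1 + N) <=
    1 + s / 2 + N ^+ 2 / (2 * s) + (1 + s) * (w - 1) / (2 * k)%:R.
Proof.
move=> w0 N0 s0 k0; set v := w `^ _.
have m0 : (0 < 2 * k)%N by rewrite muln_gt0.
have hv : v <= w / (2 * k)%:R + (1 - (2 * k)%:R^-1) by exact: powR_invn_le.
have hv2 : v ^+ 2 <= w / k%:R + (1 - k%:R^-1).
  rewrite -powR_mulrn ?powR_ge0// -powRrM natrM invfM mulrAC mulVf ?mul1r//.
  exact: powR_invn_le.
have hvN : v * N <= s / 2 * v ^+ 2 + N ^+ 2 / (2 * s).
  rewrite -subr_ge0 (_ : _ - _ = (s * v - N) ^+ 2 / (2 * s)).
    by rewrite divr_ge0 ?sqr_ge0// mulr_ge0// ltW.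
  by field; rewrite gt_eqF.
have hk : k%:R^-1 = 2 * (2 * k)%:R^-1 :> R.
  by rewrite natrM invfM mulrA mulfV ?mul1r// pnatr_eq0.
have := ler_wpM2l (divr_ge0 (ltW s0) (ler0n R 2)) hv2; rewrite hk => hsv2.
lra.
Qed.

Lemma powR_le_affine_ratio (g N alpha s : R) n k
    (m := (2 * k)%:R) (A := (2 * alpha) `^ m^-1) :
  0 <= g -> 0 <= N -> 0 < alpha -> 0 < s -> (n <= 2 * k)%N -> (0 < k)%N ->
  g `^ m^-1 <= A * (1 + s) / (m * alpha) * (g / (1 + N ^+ n))
                + (A * (1 + s / 2 - (1 + s) / m) + A / (2 * s) * N ^+ 2).
Proof.
move=> g0 N0 a0 s0 nk k0.
have D0 : 0 < 1 + N ^+ n by rewrite ltr_pwDl// exprn_ge0.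
have w0 : 0 <= g / (1 + N ^+ n) / alpha by rewrite !divr_ge0// ltW.
apply: le_trans (powR_le_ratio g0 N0 nk k0) _.
have -> : 2 * (g / (1 + N ^+ n)) = 2 * alpha * (g / (1 + N ^+ n) / alpha).
  by field; rewrite !gt_eqF.
have a2 : 0 <= 2 * alpha by rewrite mulr_ge0// ltW.
rewrite powRM// -mulrA; apply: le_trans (ler_wpM2l (powR_ge0 _ _) _) _.
  exact: (powR_mul1D_le w0 N0 s0 k0).
rewrite le_eqVlt; apply/orP; left; apply/eqP; rewrite /A /m; field.
by rewrite !gt_eqF ?ltr0n.
Qed.

End real_bounds.

Section affine_bound.
Local Open Scope ereal_scope.
Context d (T : measurableType d) (R : realType) (P : probability T R).

Lemma ge0_integral_le_affine (G H Q : T -> R) (a b c h q : R) :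
  (0 < a)%R -> (0 <= b)%R -> (0 <= c)%R ->
  (forall t, 0 <= G t)%R -> (forall t, 0 <= H t)%R -> (forall t, 0 <= Q t)%R ->
  measurable_fun [set: T] Q -> (forall t, G t <= a * H t + (b + c * Q t))%R ->
  \int[P]_t (H t)%:E <= h%:E -> \int[P]_t (Q t)%:E <= q%:E ->
  \int[P]_t (G t)%:E <= (a * h + (b + c * q))%:E.
Proof.
move=> a0 b0 c0 G0 H0 Q0 mQ GHQ hH hQ.
have mK : measurable_fun [set: T] (fun t => b + c * Q t)%R.
  by apply: measurable_funD => //; exact: measurable_funM.
have K0 t : (0 <= b + c * Q t)%R by rewrite addr_ge0// mulr_ge0.
apply: le_trans (ge0_le_integral_scale_add P a0 G0 H0 K0 mK GHQ) _.
have -> : \int[P]_t (b + c * Q t)%:E = b%:E + c%:E * \int[P]_t (Q t)%:E.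
  under eq_integral do rewrite EFinD EFinM.
  rewrite ge0_integralD//; first last.
  - by apply/measurable_EFinP; exact: measurable_funM.
  - by move=> t _; rewrite lee_fin mulr_ge0.
  rewrite integral_cst//; congr (_ + _).
    by rewrite -[RHS]mule1; congr (_ * _); exact: probability_setT.
  rewrite ge0_integralZl//; first exact/measurable_EFinP.
  by move=> t _; rewrite lee_fin.
by rewrite !EFinD !EFinM leeD ?leeD2l// lee_wpmul2l// lee_fin ?ltW.
Qed.

End affine_bound.

Lemma measurable_euclid_norm_sqr d (T : measurableType d) (R : realType) k
    (x : T -> 'rV[R]_k) :
  (forall i : 'I_k, measurable_fun [set: T] (fun t => x t ord0 i)) ->
  measurable_fun [set: T] (fun t => euclid_norm (x t) ^+ 2).
Proof.
move=> mx.
have -> : (fun t => euclid_norm (x t) ^+ 2) = (fun t => \sum_(i < k) x t ord0 i ^+ 2).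
  by apply/funext => t; rewrite sqr_sqrtr// sumr_ge0// => i _; exact: sqr_ge0.
by apply: measurable_sum => i; exact: measurable_funX.
Qed.

Theorem lemma4p4 (R : realType) (dT : measure_display) (T : measurableType dT)
  (P : probability T R) (d : nat) (x : T -> 'rV[R]_d)
  (g : 'rV[R]_d -> R) (n : nat) (alpha_c beta_c : R) :
  (forall i : 'I_d, measurable_fun setT (fun t => x t ord0 i)) ->
  (forall v, 0 <= g v) ->
  lower_semicontinuous (fun v => (g v)%:E) ->
  (1 <= n)%N -> 0 < alpha_c -> 0 < beta_c ->
  (\int[P]_t ((euclid_norm (x t)) ^+ 2)%:E <= beta_c%:E)%E ->
  (\int[P]_t (g (x t) / (1 + euclid_norm (x t) ^+ n))%:E <= alpha_c%:E)%E ->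
  (\int[P]_t (g (x t) `^ (1 / (2 * ((n + 1) %/ 2)%N)%:R))%:E
     <= ((1 + Num.sqrt beta_c) * (2 * alpha_c) `^ (1 / (2 * ((n + 1) %/ 2)%N)%:R))%:E)%E.
Proof.
move=> mx g0 _ n1 a0 b0 hnorm hratio.
set k := ((n + 1) %/ 2)%N; rewrite div1r.
have k0 : (0 < k)%N by rewrite /k; lia.
have nk : (n <= 2 * k)%N by rewrite /k; lia.
clearbody k.
set s : R := Num.sqrt beta_c; set A := (2 * alpha_c) `^ _; set m : R := (2 * k)%:R.
have s0 : 0 < s by rewrite sqrtr_gt0.
have A0 : 0 < A by rewrite powR_gt0// mulr_gt0.
have m2 : 2 <= m by rewrite /m ler_nat; lia.
have N0 (v : 'rV[R]_d) : 0 <= euclid_norm v by exact: sqrtr_ge0.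
have pw t := powR_le_affine_ratio (g0 (x t)) (N0 (x t)) a0 s0 nk k0.
have m0 : 0 < m by apply: lt_le_trans m2.
apply: le_trans (ge0_integral_le_affine _ _ _ _ _ _ _ pw hratio hnorm) _.
- by rewrite divr_gt0 ?mulr_gt0// addr_gt0.
- rewrite mulr_ge0 ?subr_ge0 ?ler_pdivrMr ?(ltW A0)//; nra.
- by rewrite divr_ge0 ?mulr_ge0 ?ltW.
- by move=> t; exact: powR_ge0.
- by move=> t; rewrite divr_ge0 ?addr_ge0 ?exprn_ge0.
- by move=> t; rewrite exprn_ge0.
- exact: measurable_euclid_norm_sqr.
rewrite lee_fin le_eqVlt; apply/orP; left; apply/eqP.
by rewrite -[beta_c](sqr_sqrtr (ltW b0)) -/s /A; field; rewrite !gt_eqF ?ltr0n.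
Qed.
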